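(* Let $G$ be a locally finite quasi-transitive graph with infinitely many ends, and let $(T,\mathcal{X})$ be a canonical tree-decomposition of $G$ such that: every bag is a finite clique; for every adhesion set $X$ there is a unique edge $tt'\in E(T)$ with $X=X_t\cap X_{t'}$; and there is an end of $G$ which is stabilized by all automorphisms of $G$. Then $G$ does not have a periodic proper vertex-coloring.
   Context: A tree-decomposition of $G$ is a pair $(T,\mathcal{X})$ with $T$ a tree and $\mathcal{X}=(X_t)_{t\in V(T)}$ subsets (bags) of $V(G)$ covering $V(G)$, such that every edge has both endpoints in some bag and for each vertex $v$ the set $\{t: v\in X_t\}$ induces a connected subtree. Its adhesion sets are the sets $X_t\cap X_{t'}$ for $tt'\in E(T)$. It is canonical if $\mathrm{Aut}(G)$ acts by automorphisms on $T$ with $g(X_t)=X_{g\cdot t}$. Locally finite: all degrees finite; quasi-transitive: finitely many $\mathrm{Aut}(G)$-orbits on $V(G)$. Ends: equivalence classes of rays, two rays equivalent if joined by infinitely many disjoint paths. A vertex-coloring is periodic if the subgroup of color-preserving automorphisms has finitely many orbits on $V(G)$. *)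

From Stdlib Require Import List Arith.
Import ListNotations.
Set Implicit Arguments.

Definition simple_graph {V : Type} (adj : V -> V -> Prop) : Prop :=
  (forall u v, adj u v -> adj v u) /\ (forall v, ~ adj v v).

Fixpoint walk {V : Type} (adj : V -> V -> Prop) (p : list V) : Prop :=
  match p with
  | [] => True
  | x :: q => match q with
              | [] => True
              | y :: _ => adj x y /\ walk adj q
              end
  end.

Definition walk_from_to {V : Type} (adj : V -> V -> Prop) (p : list V) (x y : V) : Prop :=
  walk adj p /\ hd_error p = Some x /\ hd_error (rev p) = Some y.

Definition graph_connected {V : Type} (adj : V -> V -> Prop) : Prop :=
  forall u v, exists p, walk_from_to adj p u v.

Definition locally_finite {V : Type} (adj : V -> V -> Prop) : Prop :=
  forall v, exists l : list V, forall w, adj v w -> In w l.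

Definition is_aut {V : Type} (adj : V -> V -> Prop) (f : V -> V) : Prop :=
  (exists g : V -> V, (forall v, g (f v) = v) /\ (forall v, f (g v) = v)) /\
  (forall u v, adj u v <-> adj (f u) (f v)).

Definition quasi_transitive {V : Type} (adj : V -> V -> Prop) : Prop :=
  exists l : list V, forall v, exists f u, is_aut adj f /\ In u l /\ f u = v.

Definition has_cycle {N : Type} (tadj : N -> N -> Prop) : Prop :=
  exists (p : list N) x y, NoDup p /\ 3 <= length p /\ walk_from_to tadj p x y /\ tadj y x.

Definition is_tree {N : Type} (tadj : N -> N -> Prop) : Prop :=
  simple_graph tadj /\ graph_connected tadj /\ ~ has_cycle tadj.

Definition is_ray {V : Type} (adj : V -> V -> Prop) (r : nat -> V) : Prop :=
  (forall n m, r n = r m -> n = m) /\ (forall n, adj (r n) (r (S n))).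

Definition ray_path {V : Type} (adj : V -> V -> Prop) (r1 r2 : nat -> V) (p : list V) : Prop :=
  exists n m, walk_from_to adj p (r1 n) (r2 m).

Definition disjoint_lists {V : Type} (p q : list V) : Prop :=
  forall v, In v p -> ~ In v q.

Definition equiv_rays {V : Type} (adj : V -> V -> Prop) (r1 r2 : nat -> V) : Prop :=
  exists P : nat -> list V,
    (forall i, ray_path adj r1 r2 (P i)) /\
    (forall i j, i <> j -> disjoint_lists (P i) (P j)).

Definition infinitely_many_ends {V : Type} (adj : V -> V -> Prop) : Prop :=
  exists R : nat -> nat -> V,
    (forall i, is_ray adj (R i)) /\
    (forall i j, i <> j -> ~ equiv_rays adj (R i) (R j)).

Definition has_aut_invariant_end {V : Type} (adj : V -> V -> Prop) : Prop :=
  exists r, is_ray adj r /\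
    forall f, is_aut adj f -> equiv_rays adj (fun n => f (r n)) r.

(** Tree-decompositions: T given by node type N and adjacency tadj,
    bags X : N -> V -> Prop (X t v means v is in the bag X_t). *)
Definition is_tree_decomposition {V N : Type} (adj : V -> V -> Prop)
  (tadj : N -> N -> Prop) (X : N -> V -> Prop) : Prop :=
  is_tree tadj /\
  (forall v, exists t, X t v) /\
  (forall u v, adj u v -> exists t, X t u /\ X t v) /\
  (forall v t t', X t v -> X t' v ->
     exists p, walk_from_to tadj p t t' /\ forall s, In s p -> X s v).

Definition canonical_td {V N : Type} (adj : V -> V -> Prop)
  (tadj : N -> N -> Prop) (X : N -> V -> Prop) : Prop :=
  exists act : (V -> V) -> N -> N,
    (forall f, is_aut adj f -> is_aut tadj (act f)) /\
    (forall t, act (fun v => v) t = t) /\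
    (forall f h, is_aut adj f -> is_aut adj h ->
       forall t, act (fun v => f (h v)) t = act f (act h t)) /\
    (forall f, is_aut adj f -> forall t v,
       X (act f t) v <-> exists u, X t u /\ f u = v).

Definition bags_finite_cliques {V N : Type} (adj : V -> V -> Prop) (X : N -> V -> Prop) : Prop :=
  forall t, (exists l : list V, forall v, X t v -> In v l) /\
            (forall u v, X t u -> X t v -> u <> v -> adj u v).

Definition unique_adhesion_edges {V N : Type} (tadj : N -> N -> Prop) (X : N -> V -> Prop) : Prop :=
  forall t t' s s', tadj t t' -> tadj s s' ->
    (forall v, (X t v /\ X t' v) <-> (X s v /\ X s' v)) ->
    (s = t /\ s' = t') \/ (s = t' /\ s' = t).

Definition proper_coloring {V C : Type} (adj : V -> V -> Prop) (c : V -> C) : Prop :=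
  forall u v, adj u v -> c u <> c v.

Definition periodic_coloring {V C : Type} (adj : V -> V -> Prop) (c : V -> C) : Prop :=
  exists l : list V, forall v, exists f u,
    is_aut adj f /\ (forall w, c (f w) = c w) /\ In u l /\ f u = v.

(** Orient every edge of the decomposition tree towards the end fixed by Aut(G); this gives an
    Aut(G)-equivariant parent map [up]. Since bags are cliques and adhesion sets determine their
    edges, a colour-preserving automorphism fixing one node fixes the whole tree, and by periodicity
    such automorphisms have finitely many orbits on nodes with non-empty bags. If a node had two
    children each containing the tail of a ray, moving it along its ancestor line by these
    automorphisms would produce unboundedly many such descendants of one node at one depth, two of
    them in the same orbit, which is impossible. Hence every ray either converges to the fixed end or
    follows the unique downward path of a common ancestor, and two rays of the same kind meet
    infinitely many pairwise disjoint clique bags, so they are equivalent: G has at most two ends. *)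

From Stdlib Require Import List Arith Lia Classical ClassicalEpsilon FunctionalExtensionality.
Import ListNotations.
Set Implicit Arguments.
Unset Strict Implicit.

Inductive walk_between {A : Type} (R : A -> A -> Prop) : A -> A -> list A -> Prop :=
  | walk_between_single x : walk_between R x x [x]
  | walk_between_cons x y z l :
      R x y -> walk_between R y z l -> walk_between R x z (x :: l).

Section Walks.
Variables (A : Type) (R : A -> A -> Prop).

Lemma walk_between_in_l x y l : walk_between R x y l -> In x l.
Proof. intros H; destruct H; simpl; auto. Qed.

Lemma walk_between_in_r x y l : walk_between R x y l -> In y l.
Proof. induction 1; simpl; auto. Qed.

Lemma walk_between_app x y z l1 l2 :
  walk_between R x y l1 -> walk_between R y z l2 -> walk_between R x z (l1 ++ tl l2).
Proof.
  induction 1; intros H2; simpl.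
  - destruct H2; simpl; [constructor | eapply walk_between_cons; eauto].
  - apply walk_between_cons with y; auto.
Qed.

Lemma walk_between_map {B} (R' : B -> B -> Prop) (f : A -> B) x y l :
  (forall a b, R a b -> R' (f a) (f b)) ->
  walk_between R x y l -> walk_between R' (f x) (f y) (map f l).
Proof.
  intros Hf. induction 1; simpl; [constructor | apply walk_between_cons with (f y); auto].
Qed.

Lemma walk_between_exit (P : A -> Prop) x y l :
  walk_between R x y l -> P x -> ~ P y ->
  exists a b, In a l /\ In b l /\ R a b /\ P a /\ ~ P b.
Proof.
  induction 1 as [x|x y z l Hxy Hl IH]; intros Hx Hz; [contradiction|].
  destruct (classic (P y)) as [Py|Py].
  - destruct (IH Py Hz) as (a & b & Ha & Hb & Hab & Pa & Pb).
    exists a, b; simpl; auto 10.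
  - exists x, y; repeat split; simpl; auto. right. eapply walk_between_in_l; eauto.
Qed.

Lemma walk_between_prefix x y z l :
  walk_between R x y l -> In z l -> exists l', walk_between R x z l' /\ incl l' l.
Proof.
  induction 1 as [x|x y w l Hxy Hl IH]; intros Hz.
  - destruct Hz as [<-|[]]. exists [x]; split; [constructor | apply incl_refl].
  - destruct (classic (x = z)) as [<-|Hne].
    + exists [x]; split; [constructor|]. intros a [<-|[]]; simpl; auto.
    + destruct Hz as [->|Hz]; [congruence|].
      destruct (IH Hz) as (l' & Hl' & Hincl). exists (x :: l'); split.
      * apply walk_between_cons with y; auto.
      * intros a [<-|Ha]; simpl; auto.
Qed.

Lemma walk_between_suffix x y z l1 l2 :
  walk_between R x z (l1 ++ y :: l2) -> walk_between R y z (y :: l2).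
Proof.
  revert x. induction l1 as [|a l1 IH]; intros x Hw; simpl in Hw.
  - inversion Hw; subst; [constructor | assumption].
  - inversion Hw; subst; [destruct l1; discriminate | eapply IH; eauto].
Qed.

Lemma walk_between_nodup x y l :
  walk_between R x y l -> exists l', walk_between R x y l' /\ NoDup l' /\ incl l' l.
Proof.
  induction 1 as [x|x y z l Hxy Hl IH].
  - exists [x]; repeat split; [constructor | repeat constructor; auto | apply incl_refl].
  - destruct IH as (l' & Hl' & Hnd & Hincl).
    destruct (classic (In x l')) as [Hx|Hx].
    + apply in_split in Hx. destruct Hx as (l1 & l2 & ->).
      exists (x :: l2); repeat split.
      * eapply walk_between_suffix; eauto.
      * eapply NoDup_app_remove_l; eauto.
      * intros a Ha. right. apply Hincl, in_or_app; auto.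
    + exists (x :: l'); repeat split.
      * apply walk_between_cons with y; auto.
      * constructor; auto.
      * intros a [<-|Ha]; simpl; auto.
Qed.

Lemma walk_from_to_iff p x y : walk_from_to R p x y <-> walk_between R x y p.
Proof.
  assert (Hlast : forall (a : A) l, l <> [] -> hd_error (rev (a :: l)) = hd_error (rev l)).
  { intros a l Hl. simpl. destruct (rev l) eqn:E; [|reflexivity].
    destruct Hl. rewrite <- (rev_involutive l), E. reflexivity. }
  split.
  - intros (Hw & Hh & Ht). revert x Hw Hh Ht.
    induction p as [|a p IH]; intros x Hw Hh Ht; [discriminate|].
    injection Hh as ->. destruct p as [|b p].
    + injection Ht as ->. constructor.
    + destruct Hw as [Hxb Hw]. apply walk_between_cons with b; auto.
      apply IH; auto. rewrite <- Hlast with (a := x); auto. discriminate.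
  - induction 1 as [x|x y z l Hxy Hl IH]; [repeat split|].
    destruct IH as (Hw & Hh & Ht). destruct l as [|b l]; [discriminate|].
    injection Hh as ->. repeat split; auto. rewrite Hlast; auto. discriminate.
Qed.

End Walks.

Lemma injective_eventually_avoids {A} (f : nat -> A) (L : list A) :
  (forall n m, f n = f m -> n = m) -> exists M, forall n, M <= n -> ~ In (f n) L.
Proof.
  intros Hf. induction L as [|a L [M HM]]; [exists 0; intros n _ []|].
  destruct (classic (exists n0, f n0 = a)) as [[n0 <-]|Hno].
  - exists (max M (S n0)). intros n Hn [Ha|Ha].
    + apply Hf in Ha. lia.
    + apply (HM n); auto; lia.
  - exists M. intros n Hn [Ha|Ha]; [apply Hno; eauto | apply (HM n); auto].
Qed.

Lemma disjoint_family_eventually_avoids {A} (P : nat -> list A) (L : list A) :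
  (forall i j, i <> j -> disjoint_lists (P i) (P j)) ->
  exists M, forall i, M <= i -> disjoint_lists L (P i).
Proof.
  intros Hd. induction L as [|a L [M HM]]; [exists 0; intros i _ v []|].
  destruct (classic (exists i0, In a (P i0))) as [[i0 Hi0]|Hno].
  - exists (max M (S i0)). intros i Hi v [<-|Hv] Hin.
    + apply (Hd i0 i) with a; auto. lia.
    + apply (HM i) with v; auto; lia.
  - exists M. intros i Hi v [<-|Hv] Hin; [apply Hno; eauto | apply (HM i) with v; auto].
Qed.

Lemma pigeonhole {A} n (q : nat -> A) (L : list A) :
  (forall i, i <= n -> In (q i) L) -> length L <= n ->
  exists i j, i < j /\ j <= n /\ q i = q j.
Proof.
  intros Hin Hlen. apply NNPP. intros Hno.
  assert (Hnd : NoDup (map q (seq 0 (S n)))).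
  { apply NoDup_map_NoDup_ForallPairs; [|apply seq_NoDup].
    intros i j Hi Hj E. apply in_seq in Hi, Hj.
    destruct (lt_eq_lt_dec i j) as [[H|H]|H]; auto;
      exfalso; apply Hno; [exists i, j | exists j, i]; repeat split; auto; lia. }
  assert (Hincl : incl (map q (seq 0 (S n))) L).
  { intros x Hx. apply in_map_iff in Hx. destruct Hx as (i & <- & Hi).
    apply in_seq in Hi. apply Hin. lia. }
  pose proof (NoDup_incl_length Hnd Hincl). rewrite length_map, length_seq in *. lia.
Qed.

Fixpoint sublists {A} (l : list A) : list (list A) :=
  match l with
  | [] => [[]]
  | x :: l => map (cons x) (sublists l) ++ sublists l
  end.

Lemma filter_in_sublists {A} (f : A -> bool) l : In (filter f l) (sublists l).
Proof.
  induction l as [|a l IH]; simpl; auto.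
  destruct (f a); apply in_or_app; [left; apply in_map | right]; auto.
Qed.

Section Tree.
Variables (N : Type) (tadj : N -> N -> Prop).
Hypothesis Htree : is_tree tadj.

Lemma tadj_sym a b : tadj a b -> tadj b a.
Proof. apply Htree. Qed.

Lemma tadj_neq a b : tadj a b -> a <> b.
Proof. intros H ->. exact (proj2 (proj1 Htree) b H). Qed.

Lemma tree_walk a b : exists l, walk_between tadj a b l.
Proof.
  destruct Htree as (_ & Hconn & _). destruct (Hconn a b) as [l Hl].
  exists l. apply walk_from_to_iff; auto.
Qed.

Definition side (a b s : N) : Prop := exists l, walk_between tadj b s l /\ ~ In a l.

Lemma side_refl a b : tadj a b -> side a b b.
Proof.
  intros H. exists [b]; split; [constructor|]. intros [E|[]]. exact (tadj_neq H (eq_sym E)).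
Qed.

Lemma not_side_root a b : ~ side a b a.
Proof. intros (l & Hl & Ha). apply Ha. eapply walk_between_in_r; eauto. Qed.

Lemma side_extend a b x y l : side a b x -> walk_between tadj x y l -> ~ In a l -> side a b y.
Proof.
  intros (l0 & H0 & Ha0) Hl Ha. exists (l0 ++ tl l). split; [eapply walk_between_app; eauto|].
  intros Hin. apply in_app_or in Hin. destruct Hin as [H|H]; auto.
  apply Ha. destruct l; simpl in *; auto.
Qed.

(* Acyclicity enters here: a second neighbour of [a] on [b]'s side would close a cycle. *)
Lemma side_adj_root a b x : tadj a b -> side a b x -> tadj x a -> x = b.
Proof.
  intros Hab (l & Hl & Ha) Hxa. apply NNPP; intros Hxb.
  destruct (walk_between_nodup Hl) as (l' & Hl' & Hnd & Hincl).
  destruct Htree as (_ & _ & Hacyclic). apply Hacyclic.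
  exists (a :: l'), a, x. split; [|split; [|split]]; auto.
  - constructor; auto.
  - inversion Hl'; subst; [congruence|]. match goal with H : walk_between _ _ _ _ |- _ =>
      inversion H; subst; simpl; lia end.
  - apply walk_from_to_iff. apply walk_between_cons with b; auto.
Qed.

Lemma side_exit a b x y : tadj a b -> side a b x -> tadj x y -> ~ side a b y -> y = a /\ x = b.
Proof.
  intros Hab Hx Hxy Hy.
  assert (y = a) as ->.
  { apply NNPP; intros Hne. apply Hy. apply side_extend with x [x; y]; auto.
    - apply walk_between_cons with y; [auto | constructor].
    - intros [E|[E|[]]]; subst; auto. exact (not_side_root Hx). }
  split; auto. apply side_adj_root with a; auto.
Qed.

Lemma side_dichotomy a b s : tadj a b -> side a b s \/ side b a s.
Proof.
  intros Hab. destruct (tree_walk s a) as [l Hl].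
  remember a as a' eqn:Ea in Hl.
  induction Hl as [x|x y z l Hxy Hl IH]; subst.
  - right. apply side_refl, tadj_sym; auto.
  - assert (Hstep : forall u w, side u w y -> x <> u -> side u w x).
    { intros u w Hy Hxu. apply side_extend with y [y; x]; auto.
      - apply walk_between_cons with x; [apply tadj_sym; auto | constructor].
      - intros [E|[E|[]]]; subst; auto. exact (not_side_root Hy). }
    destruct (IH eq_refl) as [H|H].
    + destruct (classic (x = a)) as [->|Hxa]; [right; apply side_refl, tadj_sym; auto|].
      left; auto.
    + destruct (classic (x = b)) as [->|Hxb]; [left; apply side_refl; auto|].
      right; auto.
Qed.

Lemma side_disjoint a b s : tadj a b -> side a b s -> side b a s -> False.
Proof.
  intros Hab H1 (l & Hl & Hb).
  destruct (walk_between_exit (P := fun z => ~ side a b z) Hl) as (x & y & Hx & Hy & Hxy & Px & Py).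
  - apply not_side_root.
  - auto.
  - apply NNPP in Py. destruct (side_exit Hab Py (tadj_sym Hxy) Px) as [-> ->]. auto.
Qed.

Lemma side_nested a b d x : tadj a b -> tadj b d -> a <> d -> side b a x -> side d b x.
Proof.
  intros Hab Hbd Had (l & Hl & Hb). exists (b :: l). split.
  - apply walk_between_cons with a; auto. apply tadj_sym; auto.
  - intros [E|Hin]; [exact (tadj_neq Hbd E)|].
    apply Had. destruct (walk_between_prefix Hl Hin) as (l' & Hl' & Hincl).
    symmetry. apply side_adj_root with b; auto; [apply tadj_sym; auto| |apply tadj_sym; auto].
    exists l'; split; auto.
Qed.

Definition nonbacktracking (c : nat -> N) : Prop :=
  (forall k, tadj (c k) (c (S k))) /\ (forall k, c (S (S k)) <> c k).

Lemma nonbacktracking_side c :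
  nonbacktracking c -> forall k j, j <= k -> side (c (S k)) (c k) (c j).
Proof.
  intros [Hadj Hnb]. induction k as [|k IH]; intros j Hj.
  - replace j with 0 by lia. apply side_refl, tadj_sym; auto.
  - destruct (Nat.eq_dec j (S k)) as [->|Hne]; [apply side_refl, tadj_sym; auto|].
    apply side_nested with (c k); auto. apply IH; lia.
Qed.

Lemma nonbacktracking_injective c : nonbacktracking c -> forall i j, c i = c j -> i = j.
Proof.
  intros Hc.
  assert (Hlt : forall i j, i < j -> c i <> c j).
  { intros i [|j] Hij E; [lia|].
    pose proof (nonbacktracking_side Hc (j := i) (k := j) ltac:(lia)) as H.
    rewrite E in H. exact (not_side_root H). }
  intros i j E. destruct (lt_eq_lt_dec i j) as [[H|H]|H]; auto;
    exfalso; [apply (Hlt i j) | apply (Hlt j i)]; auto.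
Qed.

Lemma side_map (f : N -> N) a b s : is_aut tadj f -> side a b s -> side (f a) (f b) (f s).
Proof.
  intros [[g [Hgf _]] Hf] (l & Hl & Ha). exists (map f l). split.
  - apply walk_between_map with (R := tadj); [intros u v; apply Hf | exact Hl].
  - intros Hin. apply in_map_iff in Hin. destruct Hin as (x & Hx & Hin).
    apply Ha. rewrite <- (Hgf a), <- Hx, Hgf. auto.
Qed.

End Tree.

Definition eventually {V : Type} (rho : nat -> V) (P : V -> Prop) : Prop :=
  exists M, forall n, M <= n -> P (rho n).

Section Graph.
Variables (V : Type) (adj : V -> V -> Prop).

Lemma aut_injective f : is_aut adj f -> forall x y, f x = f y -> x = y.
Proof. intros [[g [Hgf _]] _] x y E. rewrite <- (Hgf x), E, Hgf. auto. Qed.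

Lemma aut_comp f g : is_aut adj f -> is_aut adj g -> is_aut adj (fun v => f (g v)).
Proof.
  intros [[f' [F1 F2]] Hf] [[g' [G1 G2]] Hg]. split.
  - exists (fun v => g' (f' v)). split; intros v; [rewrite F1, G1 | rewrite G2, F2]; auto.
  - intros u v. rewrite Hg, Hf. tauto.
Qed.

Lemma aut_inv f g : is_aut adj f -> (forall v, g (f v) = v) -> (forall v, f (g v) = v) ->
  is_aut adj g.
Proof.
  intros [_ Hf] Hgf Hfg. split; [exists f; auto|].
  intros u v. rewrite (Hf (g u) (g v)), !Hfg. tauto.
Qed.

Lemma ray_aut f rho : is_aut adj f -> is_ray adj rho -> is_ray adj (fun n => f (rho n)).
Proof.
  intros Hf [Hinj Hadj]. split.
  - intros n m E. apply Hinj. eapply aut_injective; eauto.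
  - intros n. apply (proj1 (proj2 Hf _ _)), Hadj.
Qed.

Lemma eventually_common (rho : nat -> V) P Q :
  eventually rho P -> eventually rho Q -> exists n, P (rho n) /\ Q (rho n).
Proof. intros [M1 H1] [M2 H2]. exists (max M1 M2). split; [apply H1 | apply H2]; lia. Qed.

Lemma ray_eventually_avoids rho (L : list V) :
  is_ray adj rho -> eventually rho (fun v => ~ In v L).
Proof. intros [Hinj _]. exact (injective_eventually_avoids L Hinj). Qed.

Lemma equiv_rays_late_path rho sigma M1 M2 (L : list V) :
  equiv_rays adj rho sigma ->
  exists n m p, M1 <= n /\ M2 <= m /\ walk_between adj (rho n) (sigma m) p /\
    disjoint_lists L p.
Proof.
  intros (P & HP & Hdisj).
  destruct (choice (fun i nm => walk_between adj (rho (fst nm)) (sigma (snd nm)) (P i)))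
    as [nm Hnm].
  { intros i. destruct (HP i) as (n & m & H). exists (n, m). apply walk_from_to_iff; auto. }
  assert (Hinj1 : forall i j, fst (nm i) = fst (nm j) -> i = j).
  { intros i j E. apply NNPP; intros Hne. apply (Hdisj i j Hne (rho (fst (nm i)))).
    - eapply walk_between_in_l, Hnm.
    - rewrite E. eapply walk_between_in_l, Hnm. }
  assert (Hinj2 : forall i j, snd (nm i) = snd (nm j) -> i = j).
  { intros i j E. apply NNPP; intros Hne. apply (Hdisj i j Hne (sigma (snd (nm i)))).
    - eapply walk_between_in_r, Hnm.
    - rewrite E. eapply walk_between_in_r, Hnm. }
  destruct (injective_eventually_avoids (seq 0 M1) Hinj1) as [B1 HB1].
  destruct (injective_eventually_avoids (seq 0 M2) Hinj2) as [B2 HB2].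
  destruct (disjoint_family_eventually_avoids L Hdisj) as [B3 HB3].
  set (i := B1 + B2 + B3).
  exists (fst (nm i)), (snd (nm i)), (P i). repeat split; auto.
  - apply Nat.nlt_ge. intros Hlt. apply (HB1 i ltac:(lia)), in_seq. lia.
  - apply Nat.nlt_ge. intros Hlt. apply (HB2 i ltac:(lia)), in_seq. lia.
  - apply HB3. lia.
Qed.

End Graph.

Section CanonicalDecomposition.
Variables (V N : Type) (adj : V -> V -> Prop) (tadj : N -> N -> Prop) (X : N -> V -> Prop).
Hypothesis Htd : is_tree_decomposition adj tadj X.

Lemma decomposition_tree : is_tree tadj.
Proof. apply Htd. Qed.

Lemma bag_of_vertex v : exists t, X t v.
Proof. apply Htd. Qed.

Lemma bag_of_edge u v : adj u v -> exists t, X t u /\ X t v.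
Proof. apply Htd. Qed.

Lemma bag_walk v t t' : X t v -> X t' v ->
  exists l, walk_between tadj t t' l /\ forall s, In s l -> X s v.
Proof.
  intros H H'. destruct Htd as (_ & _ & _ & Hsub). destruct (Hsub v t t' H H') as (l & Hl & Hs).
  exists l. split; auto. apply walk_from_to_iff; auto.
Qed.

Definition adhesion (a b : N) (v : V) : Prop := X a v /\ X b v.

(* [v] lies strictly on [b]'s side of the separation of [G] given by the tree edge [ab]. *)
Definition beyond (a b : N) (v : V) : Prop :=
  ~ adhesion a b v /\ exists s, side tadj a b s /\ X s v.

Lemma adhesion_of_sides a b s s' v :
  tadj a b -> side tadj a b s -> ~ side tadj a b s' -> X s v -> X s' v -> adhesion a b v.
Proof.
  intros Hab Hs Hs' H H'. destruct (bag_walk H H') as (l & Hl & Hin).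
  destruct (walk_between_exit Hl Hs Hs') as (x & y & Hx & Hy & Hxy & Px & Py).
  destruct (side_exit decomposition_tree Hab Px Hxy Py) as [-> ->]. split; auto.
Qed.

Lemma beyond_adj a b v w : tadj a b -> beyond a b v -> adj v w -> ~ adhesion a b w -> beyond a b w.
Proof.
  intros Hab [Hv (s & Hs & Hsv)] Hvw Hw. split; auto.
  destruct (bag_of_edge Hvw) as (s' & Hs'v & Hs'w).
  destruct (classic (side tadj a b s')) as [H|H]; eauto.
  exfalso. apply Hv. eapply adhesion_of_sides; eauto.
Qed.

Lemma beyond_walk a b v w l : tadj a b -> walk_between adj v w l -> beyond a b v ->
  (forall z, In z l -> ~ adhesion a b z) -> beyond a b w.
Proof.
  intros Hab. induction 1 as [|x y z l Hxy Hl IH]; intros Hx Hl'; auto.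
  apply IH; [|intros; apply Hl'; simpl; auto].
  apply beyond_adj with x; auto. apply Hl'. right. eapply walk_between_in_l; eauto.
Qed.

Lemma beyond_disjoint a b v : tadj a b -> beyond a b v -> beyond b a v -> False.
Proof.
  intros Hab [Hv (s & Hs & Hsv)] [_ (s' & Hs' & Hs'v)].
  apply Hv. eapply adhesion_of_sides; eauto.
  intro H. exact (side_disjoint decomposition_tree Hab H Hs').
Qed.

Lemma beyond_nested a b d v : tadj a b -> tadj b d -> a <> d -> beyond b d v -> beyond a b v.
Proof.
  intros Hab Hbd Had [Hv (s & Hs & Hsv)]. split.
  - intros [Ha Hb]. apply Hv. eapply adhesion_of_sides; eauto. apply not_side_root.
  - exists s; split; auto. apply (side_nested decomposition_tree (a := d)); auto;
      apply (tadj_sym decomposition_tree); auto.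
Qed.

Lemma beyond_of_not_in_bag t v : ~ X t v -> exists b, tadj t b /\ beyond t b v.
Proof.
  intros Hv. destruct (bag_of_vertex v) as [s Hs].
  destruct (tree_walk decomposition_tree t s) as [l Hl].
  destruct (walk_between_nodup Hl) as (l' & Hl' & Hnd & _).
  inversion Hl' as [x Ex Ey El | x b z l'' Htb Hl'' Ex Ez El]; subst; [contradiction|].
  exists b. split; auto. split; [intros [Ht _]; auto|].
  exists s. split; auto. exists l''. split; auto. inversion Hnd; auto.
Qed.

Lemma beyond_neighbor_unique t b b' v :
  tadj t b -> tadj t b' -> beyond t b v -> beyond t b' v -> b = b'.
Proof.
  intros Htb Htb' Hb Hb'. apply NNPP; intros Hne.
  apply (beyond_disjoint Htb Hb). apply beyond_nested with b'; auto.
  apply (tadj_sym decomposition_tree); auto.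
Qed.

Lemma nonbacktracking_eventually_side cc s :
  nonbacktracking tadj cc -> exists B, forall k, B <= k -> side tadj (cc (S k)) (cc k) s.
Proof.
  intros Hcc. pose proof decomposition_tree as Htree.
  destruct (tree_walk Htree (cc 0) s) as [Q HQ].
  destruct (injective_eventually_avoids Q (nonbacktracking_injective Htree Hcc)) as [B HB].
  exists B. intros k Hk.
  destruct (side_dichotomy Htree s (proj1 Hcc k)) as [H|H]; auto. exfalso.
  assert (H0 : ~ side tadj (cc k) (cc (S k)) (cc 0)).
  { intros H0. apply (side_disjoint Htree (proj1 Hcc k) H0).
    apply (nonbacktracking_side Htree Hcc). lia. }
  destruct (walk_between_exit (P := fun z => ~ side tadj (cc k) (cc (S k)) z) HQ H0)
    as (x & y & Hx & Hy & Hxy & Px & Py); [tauto|].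
  apply NNPP in Py.
  destruct (side_exit Htree (proj1 Hcc k) Py (tadj_sym Htree Hxy) Px) as [-> _].
  exact (HB k Hk Hx).
Qed.

Lemma ray_meets_bag rho a b s :
  is_ray adj rho -> tadj a b -> X s (rho 0) -> side tadj b a s ->
  eventually rho (beyond a b) -> exists n, X a (rho n).
Proof.
  intros [_ Hrho] Hab Hs Hside [M HM].
  destruct (classic (adhesion a b (rho 0))) as [[Ha _]|H0]; [exists 0; auto|].
  apply NNPP. intros Hno.
  assert (Hall : forall n, beyond b a (rho n)).
  { induction n as [|n IH].
    - split; [intros [? ?]; apply H0; split; auto | exists s; auto].
    - apply beyond_adj with (rho n); auto; [apply (tadj_sym decomposition_tree); auto|].
      intros [_ Ha]. eauto. }
  exact (beyond_disjoint Hab (HM M (le_n M)) (Hall M)).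
Qed.

Lemma ray_meets_chain_bags cc rho :
  is_ray adj rho -> nonbacktracking tadj cc ->
  (forall k, eventually rho (beyond (cc k) (cc (S k)))) ->
  exists B, forall k, B <= k -> exists n, X (cc k) (rho n).
Proof.
  intros Hrho Hcc Hev. destruct (bag_of_vertex (rho 0)) as [s Hs].
  destruct (nonbacktracking_eventually_side s Hcc) as [B HB].
  exists B. intros k Hk. apply ray_meets_bag with (cc (S k)) s; auto. apply Hcc.
Qed.

Hypothesis Hbags : bags_finite_cliques adj X.

Lemma bag_finite t : exists L, forall v, X t v -> In v L.
Proof. apply Hbags. Qed.

Lemma bag_clique t u v : X t u -> X t v -> u <> v -> adj u v.
Proof. apply Hbags. Qed.

Lemma direction_exists rho t : is_ray adj rho -> exists b, tadj t b /\ eventually rho (beyond t b).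
Proof.
  intros Hrho. destruct (bag_finite t) as [L HL].
  destruct (ray_eventually_avoids L Hrho) as [M HM].
  assert (Hout : forall n, M <= n -> ~ X t (rho n)) by (intros n Hn Hx; exact (HM n Hn (HL _ Hx))).
  destruct (beyond_of_not_in_bag (Hout M (le_n M))) as (b & Htb & Hb).
  exists b. split; auto. exists M. intros n Hn. induction Hn as [|n Hn IH]; auto.
  apply beyond_adj with (rho n); auto; [apply Hrho|].
  intros [H _]. exact (Hout (S n) ltac:(lia) H).
Qed.

Lemma eventually_beyond_unique rho t b b' : tadj t b -> tadj t b' ->
  eventually rho (beyond t b) -> eventually rho (beyond t b') -> b = b'.
Proof.
  intros Htb Htb' Hb Hb'. destruct (eventually_common Hb Hb') as (n & H & H').
  eapply beyond_neighbor_unique; eauto.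
Qed.

Lemma eventually_beyond_equiv rho sigma t b : is_ray adj sigma -> equiv_rays adj rho sigma ->
  tadj t b -> eventually rho (beyond t b) -> eventually sigma (beyond t b).
Proof.
  intros Hsigma Heq Htb [M1 HM1].
  destruct (direction_exists t Hsigma) as (b' & Htb' & [M2 HM2]).
  destruct (bag_finite t) as [L HL].
  destruct (equiv_rays_late_path M1 M2 L Heq) as (n & m & p & Hn & Hm & Hp & Hdisj).
  assert (Hb : beyond t b (sigma m)).
  { apply beyond_walk with (rho n) p; auto. intros z Hz [Hz' _]. exact (Hdisj z (HL z Hz') Hz). }
  replace b with b' by (eapply beyond_neighbor_unique; eauto).
  exists M2; auto.
Qed.

Definition direction (rho : nat -> V) (t : N) : N :=
  epsilon (inhabits t) (fun b => tadj t b /\ eventually rho (beyond t b)).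

Lemma direction_spec rho t : is_ray adj rho ->
  tadj t (direction rho t) /\ eventually rho (beyond t (direction rho t)).
Proof. intros H. unfold direction. apply epsilon_spec, direction_exists; auto. Qed.

Lemma direction_unique rho t b : is_ray adj rho ->
  tadj t b -> eventually rho (beyond t b) -> direction rho t = b.
Proof.
  intros H Htb Hb. destruct (direction_spec t H) as [H1 H2]. eapply eventually_beyond_unique; eauto.
Qed.

(* Inside a clique bag the two rays are joined by a path with at most two vertices. *)
Lemma equiv_rays_of_disjoint_bags (t : nat -> N) rho sigma :
  (forall i j, i <> j -> forall v, X (t i) v -> ~ X (t j) v) ->
  (forall i, exists n m, X (t i) (rho n) /\ X (t i) (sigma m)) ->
  equiv_rays adj rho sigma.
Proof.
  intros Hdisj Hmeet.
  destruct (choice (fun i nm => X (t i) (rho (fst nm)) /\ X (t i) (sigma (snd nm)))) as [nm Hnm].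
  { intros i. destruct (Hmeet i) as (n & m & H). exists (n, m). exact H. }
  set (P := fun i => if excluded_middle_informative (rho (fst (nm i)) = sigma (snd (nm i)))
                     then [rho (fst (nm i))] else [rho (fst (nm i)); sigma (snd (nm i))]).
  assert (HPbag : forall i v, In v (P i) -> X (t i) v).
  { intros i v. unfold P. destruct (excluded_middle_informative _); simpl;
      intros Hv; repeat destruct Hv as [<-|Hv]; solve [apply Hnm | contradiction]. }
  exists P. split.
  - intros i. exists (fst (nm i)), (snd (nm i)). apply walk_from_to_iff. unfold P.
    destruct (excluded_middle_informative _) as [E|E]; [rewrite <- E; constructor|].
    apply walk_between_cons with (sigma (snd (nm i))); [|constructor].
    apply (bag_clique (proj1 (Hnm i)) (proj2 (Hnm i))); auto.
  - intros i j Hij v H H'. exact (Hdisj i j Hij v (HPbag i v H) (HPbag j v H')).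
Qed.

Hypothesis Hlf : locally_finite adj.
Hypothesis Huniq : unique_adhesion_edges tadj X.

(* The edge [ab] is recovered from the finite code [adhesion a b ∩ L] by unique adhesion. *)
Lemma adhesion_edges_finite (t0 : N) (L : list V) :
  exists E, forall a b, tadj a b -> (forall v, adhesion a b v -> In v L) -> In a E /\ In b E.
Proof.
  set (code := fun a b =>
    filter (fun v => if excluded_middle_informative (adhesion a b v) then true else false) L).
  set (edge_of := fun S => epsilon (inhabits (t0, t0)) (fun e => tadj (fst e) (snd e) /\
    (forall v, adhesion (fst e) (snd e) v -> In v L) /\ code (fst e) (snd e) = S)).
  set (E := flat_map (fun S => [fst (edge_of S); snd (edge_of S)]) (sublists L)).
  exists E. intros a b Hab HL.
  assert (He : let e := edge_of (code a b) in tadj (fst e) (snd e) /\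
    (forall v, adhesion (fst e) (snd e) v -> In v L) /\ code (fst e) (snd e) = code a b)
    by (apply epsilon_spec; exists (a, b); auto).
  assert (HE : In (fst (edge_of (code a b))) E /\ In (snd (edge_of (code a b))) E).
  { split; apply in_flat_map; exists (code a b);
      split; solve [apply filter_in_sublists | simpl; auto]. }
  destruct (edge_of (code a b)) as [a' b']. simpl in He, HE. destruct He as (Ha'b' & HL' & Hcode).
  assert (Hcode_in : forall x y v, In v L -> (In v (code x y) <-> adhesion x y v)).
  { intros x y v Hv. unfold code. rewrite filter_In.
    destruct (excluded_middle_informative _); intuition discriminate. }
  assert (Hsame : forall v, adhesion a b v <-> adhesion a' b' v).
  { intros v. split; intros H.
    - rewrite <- Hcode_in, Hcode, Hcode_in; auto.
    - rewrite <- Hcode_in, <- Hcode, Hcode_in; auto. }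
  destruct (Huniq Hab Ha'b' Hsame) as [[-> ->]|[-> ->]]; tauto.
Qed.

Lemma bags_containing_finite u : exists L, forall s, X s u -> In s L.
Proof.
  destruct (classic (exists s0, X s0 u)) as [[s0 Hs0]|Hno];
    [|exists []; intros s Hs; exfalso; eauto].
  destruct (Hlf u) as [Lu HLu].
  destruct (adhesion_edges_finite s0 (u :: Lu)) as [E HE].
  exists (s0 :: E). intros s Hs. destruct (classic (s = s0)) as [->|Hne]; [left; auto|right].
  destruct (bag_walk Hs Hs0) as (l & Hl & Hin).
  inversion Hl as [x Ex Ey El | x q z l' Hsq Hl' Ex Ez El]; subst; [congruence|].
  apply (HE s q Hsq). intros v [Hsv Hqv].
  destruct (classic (v = u)) as [->|Hvu]; [left; auto|right].
  apply HLu, (bag_clique Hs Hsv). auto.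
Qed.

Lemma injective_bags_disjoint_subsequence (t : nat -> N) B :
  (forall i j, t i = t j -> i = j) ->
  exists ks : nat -> nat, (forall i, B <= ks i) /\
    (forall i j, i <> j -> forall v, X (t (ks i)) v -> ~ X (t (ks j)) v).
Proof.
  intros Ht.
  destruct (choice _ bag_finite) as [bag Hbag].
  destruct (choice _ bags_containing_finite) as [nodes Hnodes].
  assert (Hnext : forall k, exists k', k < k' /\ B <= k' /\
    forall j, j <= k -> forall v, X (t j) v -> ~ X (t k') v).
  { intros k.
    destruct (injective_eventually_avoids
      (flat_map (fun j => flat_map nodes (bag (t j))) (seq 0 (S k))) Ht) as [M HM].
    exists (max (S k) (max B M)). repeat split; try lia.
    intros j Hj v Hjv Hv. apply (HM (max (S k) (max B M))); [lia|].
    apply in_flat_map. exists j. split; [apply in_seq; lia|].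
    apply in_flat_map. exists v. auto. }
  destruct (choice _ Hnext) as [next Hnext'].
  set (ks := fun i => Nat.iter i next B).
  assert (Hmono : forall i j, i <= j -> ks i <= ks j).
  { intros i j Hij. induction Hij as [|j Hij IH]; auto.
    pose proof (proj1 (Hnext' (ks j))). simpl. fold (ks j). lia. }
  assert (Hlt : forall i j, i < j -> forall v, X (t (ks i)) v -> ~ X (t (ks j)) v).
  { intros i [|j] Hij; [lia|]. apply (Hnext' (ks j)). apply Hmono. lia. }
  exists ks. split.
  - intros [|i]; simpl; [lia | apply Hnext'].
  - intros i j Hij v H H'. destruct (proj1 (Nat.lt_gt_cases i j) Hij) as [Hl|Hg];
      [exact (Hlt i j Hl v H H') | exact (Hlt j i Hg v H' H)].
Qed.

Lemma equiv_rays_along_chain cc rho sigma :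
  is_ray adj rho -> is_ray adj sigma -> nonbacktracking tadj cc ->
  (forall k, eventually rho (beyond (cc k) (cc (S k)))) ->
  (forall k, eventually sigma (beyond (cc k) (cc (S k)))) ->
  equiv_rays adj rho sigma.
Proof.
  intros Hrho Hsigma Hcc Hev Hev'.
  destruct (ray_meets_chain_bags Hrho Hcc Hev) as [B1 HB1].
  destruct (ray_meets_chain_bags Hsigma Hcc Hev') as [B2 HB2].
  destruct (injective_bags_disjoint_subsequence (max B1 B2)
    (nonbacktracking_injective decomposition_tree Hcc)) as (ks & HB & Hdisj).
  apply equiv_rays_of_disjoint_bags with (fun i => cc (ks i)); auto.
  intros i. destruct (HB1 (ks i)) as [n Hn]; [specialize (HB i); lia|].
  destruct (HB2 (ks i)) as [m Hm]; [specialize (HB i); lia|]. eauto.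
Qed.

Lemma bag_nonempty_of_two_neighbors x y y' : tadj x y -> tadj x y' -> y <> y' -> exists v, X x v.
Proof.
  intros Hy Hy' Hne. apply NNPP; intros Hno.
  destruct (Huniq Hy Hy') as [[_ E]|[E _]]; auto.
  - intros v; split; intros [H _]; exfalso; eauto.
  - subst. exact (tadj_neq decomposition_tree Hy eq_refl).
Qed.

Variable act : (V -> V) -> N -> N.
Hypothesis Hact_aut : forall f, is_aut adj f -> is_aut tadj (act f).
Hypothesis Hact_id : forall t, act (fun v => v) t = t.
Hypothesis Hact_comp : forall f h, is_aut adj f -> is_aut adj h ->
  forall t, act (fun v => f (h v)) t = act f (act h t).
Hypothesis Hact_bag : forall f, is_aut adj f ->
  forall t v, X (act f t) v <-> exists u, X t u /\ f u = v.

Lemma act_tadj f a b : is_aut adj f -> tadj a b -> tadj (act f a) (act f b).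
Proof. intros Hf H. exact (proj1 (proj2 (Hact_aut Hf) a b) H). Qed.

Lemma act_injective f a b : is_aut adj f -> act f a = act f b -> a = b.
Proof. intros Hf. apply (aut_injective (Hact_aut Hf)). Qed.

Lemma bag_act f t u : is_aut adj f -> X t u -> X (act f t) (f u).
Proof. intros Hf H. apply Hact_bag; eauto. Qed.

Lemma bag_act_inv f t u : is_aut adj f -> X (act f t) (f u) -> X t u.
Proof.
  intros Hf H. apply Hact_bag in H as (u' & Hu' & E); auto.
  apply (aut_injective Hf) in E. subst. auto.
Qed.

Lemma act_cancel f g : is_aut adj f -> is_aut adj g -> (forall v, f (g v) = v) ->
  forall t, act f (act g t) = t.
Proof.
  intros Hf Hg Hfg t. rewrite <- Hact_comp; auto.
  replace (fun v => f (g v)) with (fun v : V => v); auto.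
  apply functional_extensionality. auto.
Qed.

Lemma beyond_act f a b v : is_aut adj f -> beyond a b v -> beyond (act f a) (act f b) (f v).
Proof.
  intros Hf [Hv (s & Hs & Hsv)]. split.
  - intros [H H']. apply Hv. split; eapply bag_act_inv; eauto.
  - exists (act f s). split; [apply side_map|apply bag_act]; auto.
Qed.

Lemma eventually_beyond_act f rho a b : is_aut adj f -> eventually rho (beyond a b) ->
  eventually (fun n => f (rho n)) (beyond (act f a) (act f b)).
Proof. intros Hf [M HM]. exists M. intros n Hn. apply beyond_act; auto. Qed.

Variable r : nat -> V.
Hypothesis Hr : is_ray adj r.
Hypothesis Hr_fixed : forall f, is_aut adj f -> equiv_rays adj (fun n => f (r n)) r.

Definition up (t : N) : N := direction r t.

Lemma up_spec t : tadj t (up t) /\ eventually r (beyond t (up t)).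
Proof. apply direction_spec, Hr. Qed.

Lemma up_act f t : is_aut adj f -> up (act f t) = act f (up t).
Proof.
  intros Hf. apply direction_unique; auto; [apply act_tadj, up_spec; auto|].
  apply eventually_beyond_equiv with (fun n => f (r n)); auto;
    [apply act_tadj, up_spec; auto|].
  apply eventually_beyond_act, up_spec; auto.
Qed.

Lemma up_up_neq t : up (up t) <> t.
Proof.
  intros E. destruct (eventually_common (proj2 (up_spec t)) (proj2 (up_spec (up t))))
    as (n & H & H').
  rewrite E in H'. exact (beyond_disjoint (proj1 (up_spec t)) H H').
Qed.

Lemma eventually_beyond_up rho x y : eventually rho (beyond x y) -> tadj x y -> y <> up x ->
  eventually rho (beyond (up x) x).
Proof.
  intros [M HM] Hxy Hne. exists M. intros n Hn. apply beyond_nested with y; auto.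
  apply (tadj_sym decomposition_tree), up_spec.
Qed.

Lemma tadj_up_cases x y : tadj x y -> up x = y \/ up y = x.
Proof.
  intros Hxy. destruct (classic (up x = y)) as [H|H]; auto. right.
  apply direction_unique; auto; [apply (tadj_sym decomposition_tree); auto|].
  destruct (proj2 (up_spec x)) as [M HM]. exists M. intros n Hn.
  apply beyond_nested with (up x); auto; [apply (tadj_sym decomposition_tree); auto | apply up_spec].
Qed.

Lemma up_of_child x y : tadj x y -> y <> up x -> up y = x.
Proof. intros Hxy Hne. destruct (tadj_up_cases Hxy); congruence. Qed.


Definition descends (rho : nat -> V) (s : N) : Prop := eventually rho (beyond (up s) s).

Definition has_descending_ray (s : N) : Prop := exists rho, is_ray adj rho /\ descends rho s.

Lemma descends_direction rho x : is_ray adj rho -> descends rho x ->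
  up (direction rho x) = x /\ descends rho (direction rho x).
Proof.
  intros Hrho Hx. destruct (direction_spec x Hrho) as [Hadj Hev].
  assert (Hup : up (direction rho x) = x).
  { apply up_of_child; auto. intros E. rewrite E in Hev.
    destruct (eventually_common Hx Hev) as (n & H & H').
    exact (beyond_disjoint (proj1 (up_spec x)) H' H). }
  split; auto. unfold descends. rewrite Hup. auto.
Qed.

Lemma descends_up rho x : descends rho x -> descends rho (up x).
Proof.
  intros H. apply eventually_beyond_up with x; auto.
  - apply (tadj_sym decomposition_tree), up_spec.
  - intros E. exact (up_up_neq (eq_sym E)).
Qed.

Lemma descends_act f rho s : is_aut adj f -> descends rho s ->
  descends (fun n => f (rho n)) (act f s).
Proof. intros Hf H. unfold descends. rewrite up_act; auto. apply eventually_beyond_act; auto. Qed.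

Definition iter_up (k : nat) (t : N) : N := Nat.iter k up t.

Lemma iter_up_succ k t : iter_up (S k) t = iter_up k (up t).
Proof. apply Nat.iter_succ_r. Qed.

Lemma iter_up_add i j t : iter_up (i + j) t = iter_up i (iter_up j t).
Proof. apply Nat.iter_add. Qed.

Lemma iter_up_act f k t : is_aut adj f -> iter_up k (act f t) = act f (iter_up k t).
Proof. intros Hf. symmetry. apply Nat.iter_swap_gen. intros a. symmetry. apply up_act; auto. Qed.

Lemma descends_iter_up rho x k : descends rho x -> descends rho (iter_up k x).
Proof. intros H. induction k as [|k IH]; auto. apply descends_up, IH. Qed.

Lemma common_ancestor x y : exists i j, iter_up i x = iter_up j y.
Proof.
  destruct (tree_walk decomposition_tree x y) as [l Hl].
  induction Hl as [x|x y z l Hxy Hl (i & j & E)]; [exists 0, 0; auto|].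
  destruct (tadj_up_cases Hxy) as [H|H].
  - exists (S i), j. rewrite iter_up_succ, H. auto.
  - destruct i as [|i].
    + exists 0, (S j). simpl in *. rewrite <- E, H. auto.
    + exists i, j. rewrite <- E, iter_up_succ, H. auto.
Qed.

Variables (C : Type) (c : V -> C).
Hypothesis Hc : proper_coloring adj c.

Definition color_aut (h : V -> V) : Prop := is_aut adj h /\ forall w, c (h w) = c w.

Lemma color_aut_comp f g : color_aut f -> color_aut g -> color_aut (fun v => f (g v)).
Proof.
  intros [Hf Cf] [Hg Cg]. split; [apply aut_comp; auto|]. intros w. rewrite Cf, Cg. auto.
Qed.

Lemma color_aut_inverse f : color_aut f ->
  exists g, color_aut g /\ (forall v, g (f v) = v) /\ (forall v, f (g v) = v).
Proof.
  intros [Hf Cf]. destruct Hf as [[g [Hgf Hfg]] Hadj] eqn:EHf. exists g.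
  split; auto. split; [eapply aut_inv; eauto|]. intros w. rewrite <- (Cf (g w)), Hfg. auto.
Qed.

(* Bags are cliques and the colouring is proper, so colours are distinct within a bag. *)
Lemma color_aut_fixes_bag h t v : color_aut h -> act h t = t -> X t v -> h v = v.
Proof.
  intros [Hh Ch] Ht Hv. apply NNPP; intros Hne.
  assert (Hhv : X t (h v)) by (rewrite <- Ht; apply bag_act; auto).
  exact (Hc (bag_clique Hhv Hv Hne) (Ch v)).
Qed.

Lemma color_aut_fixes_neighbor h x y : color_aut h -> act h x = x -> tadj x y -> act h y = y.
Proof.
  intros Hh Hx Hxy. pose proof (proj1 Hh) as Ha.
  assert (Hxy' : tadj x (act h y)) by (rewrite <- Hx at 1; apply act_tadj; auto).
  destruct (Huniq Hxy Hxy') as [[_ E]|[E _]]; auto.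
  - intros v. split.
    + intros [Hxv Hyv]. split; auto. rewrite <- (color_aut_fixes_bag Hh Hx Hxv). apply bag_act; auto.
    + intros [Hxv Hyv]. apply Hact_bag in Hyv as (u & Hu & <-); auto.
      assert (Hxu : X x u) by (rewrite <- Hx in Hxv; eapply bag_act_inv; eauto).
      rewrite (color_aut_fixes_bag Hh Hx Hxu). split; auto.
  - subst. exfalso. exact (tadj_neq decomposition_tree Hxy eq_refl).
Qed.

Lemma color_aut_fixing_node h t : color_aut h -> act h t = t -> forall s, act h s = s.
Proof.
  intros Hh Ht s. destruct (tree_walk decomposition_tree t s) as [l Hl].
  induction Hl; auto. apply IHHl. eapply color_aut_fixes_neighbor; eauto.
Qed.

Hypothesis Hper : periodic_coloring adj c.

Lemma color_orbit_representatives : exists LN, forall t, (exists v, X t v) ->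
  exists h t0, color_aut h /\ In t0 LN /\ act h t0 = t.
Proof.
  destruct Hper as [l0 Hl0]. destruct (choice _ bags_containing_finite) as [nodes Hnodes].
  exists (flat_map nodes l0). intros t [v Hv].
  destruct (Hl0 v) as (h & u & Hh & Ch & Hu & <-).
  destruct (color_aut_inverse (conj Hh Ch)) as (g & [Hg Cg] & Hgh & Hhg).
  exists h, (act g t). split; [split; auto|]. split.
  - apply in_flat_map. exists u. split; auto. apply Hnodes. rewrite <- (Hgh u). apply bag_act; auto.
  - apply act_cancel; auto.
Qed.

Lemma color_orbits_pigeonhole : exists K, forall f : nat -> N, (forall i, exists v, X (f i) v) ->
  exists i j, i < j /\ j <= K /\ exists h, color_aut h /\ act h (f i) = f j.
Proof.
  destruct color_orbit_representatives as [LN HLN]. exists (length LN). intros f Hf.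
  destruct (choice (fun i ht => color_aut (fst ht) /\ In (snd ht) LN /\ act (fst ht) (snd ht) = f i))
    as [rep Hrep].
  { intros i. destruct (HLN (f i) (Hf i)) as (h & t0 & H). exists (h, t0). exact H. }
  destruct (@pigeonhole _ (length LN) (fun i => snd (rep i)) LN) as (i & j & Hij & Hj & E); auto.
  { intros i _. apply Hrep. }
  exists i, j. repeat split; auto.
  destruct (Hrep i) as (Hi & _ & Ei). destruct (Hrep j) as (Hj' & _ & Ej).
  destruct (color_aut_inverse Hi) as (g & Hg & Hgh & _).
  exists (fun v => fst (rep j) (g v)). split; [apply color_aut_comp; auto|].
  rewrite Hact_comp by (apply Hj' || apply Hg).
  rewrite <- Ei, (act_cancel (proj1 Hg) (proj1 Hi) Hgh), E. exact Ej.
Qed.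

Lemma bag_nonempty_up t : exists v, X (up t) v.
Proof.
  apply bag_nonempty_of_two_neighbors with t (up (up t)).
  - apply (tadj_sym decomposition_tree), up_spec.
  - apply up_spec.
  - intros E. exact (up_up_neq (eq_sym E)).
Qed.

Definition child (x : N) : N :=
  direction (epsilon (inhabits r) (fun rho => is_ray adj rho /\ descends rho x)) x.

Lemma child_spec x : has_descending_ray x -> up (child x) = x /\ has_descending_ray (child x).
Proof.
  intros H.
  set (rho := epsilon (inhabits r) (fun rho => is_ray adj rho /\ descends rho x)).
  assert (Hrho : is_ray adj rho /\ descends rho x) by (apply epsilon_spec; auto).
  destruct (descends_direction (proj1 Hrho) (proj2 Hrho)) as [Hup Hd].
  split; auto. exists rho. split; auto. apply Hrho.
Qed.

Lemma bag_nonempty_of_descending_ray s : has_descending_ray s -> exists v, X s v.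
Proof. intros H. rewrite <- (proj1 (child_spec H)). apply bag_nonempty_up. Qed.

Lemma has_descending_ray_act f s : is_aut adj f -> has_descending_ray s -> has_descending_ray (act f s).
Proof.
  intros Hf (rho & Hrho & Hd). exists (fun n => f (rho n)).
  split; [apply ray_aut | apply descends_act]; auto.
Qed.

Definition branching (s : N) : Prop := exists c1 c2, c1 <> c2 /\ up c1 = s /\ up c2 = s /\
  has_descending_ray c1 /\ has_descending_ray c2.

Lemma branching_act f s : is_aut adj f -> branching s -> branching (act f s).
Proof.
  intros Hf (c1 & c2 & Hne & H1 & H2 & Hr1 & Hr2). exists (act f c1), (act f c2).
  repeat split; try apply has_descending_ray_act; auto.
  - intros E. apply Hne. eapply act_injective; eauto.
  - rewrite up_act, H1; auto.
  - rewrite up_act, H2; auto.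
Qed.

Definition many_descendants (u : N) (D n : nat) : Prop := exists L, NoDup L /\ length L = n /\
  forall s, In s L -> iter_up D s = u /\ has_descending_ray s.

Lemma children_descendants u D L : NoDup L ->
  (forall s, In s L -> iter_up D s = u /\ has_descending_ray s) ->
  NoDup (map child L) /\ forall z, In z (map child L) -> iter_up (S D) z = u /\ has_descending_ray z.
Proof.
  intros Hnd HL. split.
  - apply NoDup_map_NoDup_ForallPairs; auto. intros x y Hx Hy E.
    rewrite <- (proj1 (child_spec (proj2 (HL x Hx)))), <- (proj1 (child_spec (proj2 (HL y Hy)))), E.
    auto.
  - intros z Hz. apply in_map_iff in Hz as (x & <- & Hx).
    destruct (HL x Hx) as [HD Hrx]. destruct (child_spec Hrx) as [Hup Hrc].
    rewrite iter_up_succ, Hup. auto.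
Qed.

Lemma many_descendants_succ u D n : many_descendants u D n -> many_descendants u (S D) n.
Proof.
  intros (L & Hnd & Hlen & HL). destruct (children_descendants Hnd HL) as [Hnd' HL'].
  exists (map child L). rewrite length_map. auto.
Qed.

Lemma many_descendants_le u D D' n : many_descendants u D n -> D <= D' -> many_descendants u D' n.
Proof. intros H Hle. induction Hle; auto. apply many_descendants_succ; auto. Qed.

Lemma many_descendants_branching u D n s : many_descendants u D n ->
  iter_up D s = u -> branching s -> many_descendants u (S D) (S n).
Proof.
  intros (L & Hnd & Hlen & HL) Hs (c1 & c2 & Hne & Hc1 & Hc2 & Hr1 & Hr2).
  destruct (classic (In s L)) as [Hin|Hnin].
  - (* [child s] already occurs in [map child L]; the other child of [s] is new. *)
    assert (Hnew : exists c', up c' = s /\ has_descending_ray c' /\ c' <> child s).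
    { destruct (classic (c1 = child s)) as [<-|]; [exists c2 | exists c1]; auto. }
    destruct Hnew as (c' & Hc' & Hrc' & Hnc').
    destruct (children_descendants Hnd HL) as [Hnd' HL'].
    exists (c' :: map child L). split; [|split].
    + constructor; auto. intros Hold. apply in_map_iff in Hold as (x & Hx & HxL).
      apply Hnc'. rewrite <- Hx, <- Hc', <- Hx. f_equal.
      symmetry. apply (child_spec (proj2 (HL x HxL))).
    + simpl. rewrite length_map. auto.
    + intros z [<-|Hz]; [|apply HL'; auto]. rewrite iter_up_succ, Hc'. auto.
  - apply many_descendants_succ. exists (s :: L). split; [constructor; auto | split; [simpl; auto|]].
    intros z [<-|Hz]; [|apply HL; auto]. split; auto.
    destruct Hr1 as (rho & Hrho & Hd). exists rho. split; auto.
    rewrite <- Hc1. apply descends_up; auto.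
Qed.

(* Two descendants of [u] at the same depth in one colour-orbit would give a colour-preserving
   automorphism fixing [u], hence fixing every node. *)
Lemma many_descendants_bounded : exists K, forall u D, ~ many_descendants u D (S K).
Proof.
  destruct color_orbits_pigeonhole as [K HK]. exists K.
  intros u D (L & Hnd & Hlen & HL). destruct L as [|s0 L']; [discriminate|].
  set (L := s0 :: L') in *.
  assert (Hin : forall i, In (nth i L s0) L).
  { intros i. destruct (Nat.lt_ge_cases i (length L));
      [apply nth_In; auto | rewrite nth_overflow; auto; left; auto]. }
  destruct (HK (fun i => nth i L s0)) as (i & j & Hij & Hj & h & Hh & E).
  { intros i. apply bag_nonempty_of_descending_ray, HL, Hin. }
  assert (Hu : act h u = u).
  { destruct (HL _ (Hin i)) as [Hi _]. destruct (HL _ (Hin j)) as [Hj' _].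
    rewrite <- Hi at 1. rewrite <- iter_up_act, E; auto. apply Hh. }
  rewrite (color_aut_fixing_node Hh Hu) in E.
  apply (NoDup_nth L s0) in E; auto; lia.
Qed.

Lemma ancestor_shift t : exists d m g, 0 < m /\ color_aut g /\
  iter_up m (act g (iter_up d t)) = iter_up d t.
Proof.
  destruct color_orbits_pigeonhole as [K HK].
  destruct (HK (fun i => iter_up (S i) t)) as (i & j & Hij & _ & h & Hh & E).
  { intros i. apply bag_nonempty_up. }
  destruct (color_aut_inverse Hh) as (g & Hg & Hgh & _).
  exists (S j), (j - i), g. split; [lia|]. split; auto.
  rewrite <- E at 1. rewrite (act_cancel (proj1 Hg) (proj1 Hh) Hgh), <- iter_up_add.
  f_equal. lia.
Qed.

(* Shifting a branching node by the automorphism of [ancestor_shift] produces branching nodes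
   ever deeper below one ancestor, and each of them adds a descendant carrying a ray. *)
Lemma no_branching t : ~ branching t.
Proof.
  intros Hbr. destruct (ancestor_shift t) as (d & m & g & Hm & Hg & Hshift).
  set (u := iter_up d t) in *.
  assert (Hbelow : forall k, exists s, iter_up (k * m + d) s = u /\ branching s).
  { induction k as [|k (s & Hs & Hbs)]; [exists t; auto|].
    exists (act g s). split; [|apply branching_act; auto; apply Hg].
    replace (S k * m + d) with (m + (k * m + d)) by lia.
    rewrite iter_up_add, iter_up_act, Hs; auto. apply Hg. }
  assert (Hmany : forall k, many_descendants u (S (k * m + d)) (S k)).
  { induction k as [|k IH].
    - destruct (Hbelow 0) as (s & Hs & Hbs). apply many_descendants_branching with s; auto.
      exists []. split; [constructor | split; [auto | intros _ []]].
    - destruct (Hbelow (S k)) as (s & Hs & Hbs). apply many_descendants_branching with s; auto.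
      apply many_descendants_le with (S (k * m + d)); auto. simpl. lia. }
  destruct many_descendants_bounded as [K HK]. exact (HK _ _ (Hmany K)).
Qed.

Definition upward (rho : nat -> V) : Prop := forall t, eventually rho (beyond t (up t)).

Lemma iter_up_nonbacktracking t : nonbacktracking tadj (fun k => iter_up k t).
Proof. split; intros k; [apply up_spec | apply up_up_neq]. Qed.

Lemma upward_rays_equiv rho sigma : is_ray adj rho -> is_ray adj sigma ->
  upward rho -> upward sigma -> equiv_rays adj rho sigma.
Proof.
  intros Hrho Hsigma Hu Hu'. destruct (bag_of_vertex (r 0)) as [t _].
  apply equiv_rays_along_chain with (fun k => iter_up k t); auto using iter_up_nonbacktracking.
Qed.

Lemma descends_of_not_upward rho : is_ray adj rho -> ~ upward rho -> exists t, descends rho t.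
Proof.
  intros Hrho Hu. apply NNPP; intros Hno. apply Hu. intros t.
  destruct (direction_spec t Hrho) as [Hadj Hev].
  destruct (classic (direction rho t = up t)) as [E|E]; [rewrite <- E; auto|].
  exfalso. apply Hno. exists t. eapply eventually_beyond_up; eauto.
Qed.

Definition descent (rho : nat -> V) (m : N) (k : nat) : N := Nat.iter k (direction rho) m.

Lemma descent_spec rho m : is_ray adj rho -> descends rho m -> forall k,
  up (descent rho m (S k)) = descent rho m k /\ descends rho (descent rho m (S k)).
Proof.
  intros Hrho Hm.
  assert (Hd : forall k, descends rho (descent rho m k)).
  { induction k as [|k IH]; auto. apply (descends_direction Hrho IH). }
  intros k. apply (descends_direction Hrho (Hd k)).
Qed.

Lemma descent_beyond rho m k : is_ray adj rho -> descends rho m ->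
  eventually rho (beyond (descent rho m k) (descent rho m (S k))).
Proof.
  intros Hrho Hm. destruct (descent_spec Hrho Hm k) as [Hup Hd].
  unfold descends in Hd. rewrite Hup in Hd. exact Hd.
Qed.

Lemma descent_nonbacktracking rho m : is_ray adj rho -> descends rho m ->
  nonbacktracking tadj (descent rho m).
Proof.
  intros Hrho Hm. split; intros k.
  - rewrite <- (proj1 (descent_spec Hrho Hm k)).
    apply (tadj_sym decomposition_tree), up_spec.
  - intros E. apply (up_up_neq (t := descent rho m k)).
    rewrite <- E at 1. rewrite (proj1 (descent_spec Hrho Hm (S k))). apply descent_spec; auto.
Qed.

(* Two descending rays follow the same path down from a common ancestor: a first point where
   their paths split would be a branching node. *)
Lemma descending_rays_equiv rho sigma : is_ray adj rho -> is_ray adj sigma ->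
  ~ upward rho -> ~ upward sigma -> equiv_rays adj rho sigma.
Proof.
  intros Hrho Hsigma Hu Hu'.
  destruct (descends_of_not_upward Hrho Hu) as [t Ht].
  destruct (descends_of_not_upward Hsigma Hu') as [t' Ht'].
  destruct (common_ancestor t t') as (i & j & E).
  set (m := iter_up i t).
  assert (Hm : descends rho m) by (apply descends_iter_up; auto).
  assert (Hm' : descends sigma m) by (unfold m; rewrite E; apply descends_iter_up; auto).
  destruct (classic (forall k, descent rho m k = descent sigma m k)) as [Hsame|Hsplit].
  - apply equiv_rays_along_chain with (descent rho m);
      auto using descent_nonbacktracking, descent_beyond.
    intros k. rewrite !Hsame. apply descent_beyond; auto.
  - exfalso.
    assert (Hfirst : exists k, descent rho m k = descent sigma m k /\
                               descent rho m (S k) <> descent sigma m (S k)).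
    { apply NNPP; intros Hno. apply Hsplit. induction k as [|k IH]; auto.
      apply NNPP; intros Hne. eauto. }
    destruct Hfirst as (k & E1 & E2).
    destruct (descent_spec Hrho Hm k) as [Hup Hd].
    destruct (descent_spec Hsigma Hm' k) as [Hup' Hd'].
    apply (no_branching (t := descent rho m k)).
    exists (descent rho m (S k)), (descent sigma m (S k)). repeat split; auto.
    + rewrite E1. auto.
    + exists rho. auto.
    + exists sigma. auto.
Qed.

Lemma two_of_three_rays_equiv rho1 rho2 rho3 :
  is_ray adj rho1 -> is_ray adj rho2 -> is_ray adj rho3 ->
  equiv_rays adj rho1 rho2 \/ equiv_rays adj rho1 rho3 \/ equiv_rays adj rho2 rho3.
Proof.
  intros H1 H2 H3.
  destruct (classic (upward rho1)) as [U1|U1], (classic (upward rho2)) as [U2|U2],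
    (classic (upward rho3)) as [U3|U3];
    auto using upward_rays_equiv, descending_rays_equiv.
Qed.

End CanonicalDecomposition.

Theorem lemma4p4 (V N : Type) (adj : V -> V -> Prop) (tadj : N -> N -> Prop)
  (X : N -> V -> Prop) :
  simple_graph adj -> graph_connected adj ->
  locally_finite adj -> quasi_transitive adj -> infinitely_many_ends adj ->
  is_tree_decomposition adj tadj X -> canonical_td adj tadj X ->
  bags_finite_cliques adj X -> unique_adhesion_edges tadj X ->
  has_aut_invariant_end adj ->
  forall (C : Type) (c : V -> C), proper_coloring adj c -> ~ periodic_coloring adj c.
Proof.
  intros _ _ Hlf _ (R & HR & Hne) Htd (act & Hact_aut & Hact_id & Hact_comp & Hact_bag) Hbags
    Huniq (r & Hr & Hr_fixed) C c Hc Hper.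
  destruct (two_of_three_rays_equiv Htd Hbags Hlf Huniq Hact_aut Hact_id Hact_comp Hact_bag
    Hr Hr_fixed Hc Hper (HR 0) (HR 1) (HR 2)) as [E|[E|E]];
    [apply (Hne 0 1) | apply (Hne 0 2) | apply (Hne 1 2)]; auto.
Qed.
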